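(* Let $C_1 = [0,1] \setminus \left(\frac{1}{3}, \frac{2}{3}\right)$ and for $i \geq 2$ let $C_i = \frac{1}{3} C_{i-1} \cup \left(\frac{2}{3} + \frac{1}{3} C_{i-1}\right)$. Then $M_{C_i} = (0,1)$ for all integers $i \geq 1$.
   Context: For a set $A \subset \mathbb{R}$, the midpoint set of $A$ is $M_A := \left\{\frac{x+y}{2} : x, y \in A,\ x \neq y\right\}$. For $c \in \mathbb{R}$ and $A \subset \mathbb{R}$, $cA = \{ca : a \in A\}$ and $c + A = \{c + a : a \in A\}$. *)

From Stdlib Require Import Reals.
Open Scope R_scope.

Definition midpoint_set (A : R -> Prop) : R -> Prop :=
  fun m => exists x y, A x /\ A y /\ x <> y /\ m = (x + y) / 2.

Definition scale_set (c : R) (A : R -> Prop) : R -> Prop :=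
  fun z => exists a, A a /\ z = c * a.

Definition shift_set (c : R) (A : R -> Prop) : R -> Prop :=
  fun z => exists a, A a /\ z = c + a.

(* Cantor approximations: C 1 = [0,1] \ (1/3,2/3),
   C i = (1/3) C (i-1) ∪ (2/3 + (1/3) C (i-1)) for i >= 2.
   C 0 is an unused placeholder (the empty set). *)
Fixpoint cantor_C (i : nat) : R -> Prop :=
  match i with
  | O => fun _ => False
  | S O => fun x => 0 <= x <= 1 /\ ~ (1/3 < x < 2/3)
  | S ((S _) as j) => fun x =>
      scale_set (1/3) (cantor_C j) x \/
      shift_set (2/3) (scale_set (1/3) (cantor_C j)) x
  end.

(** The Cantor approximations contain 0 and 1, lie in [0,1], and have every
    point of (0,1) as a midpoint; this property survives the step
    A ↦ A/3 ∪ (2/3 + A/3).  Midpoints in the outer thirds are rescaled midpoints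
    of A.  A midpoint m of the middle third is realised by one point from each
    half, a/3 and 2/3 + b/3, which requires a + b = 6m - 2 ∈ [0,2] with
    a, b ∈ A; every s ∈ [0,2] is such a sum, as 0 + 0, 1 + 1 or a midpoint
    sum.  Starting from C_1 = step [0,1] gives the result. *)

From Stdlib Require Import Reals Lra Lia.
Open Scope R_scope.

Definition cantor_step (A : R -> Prop) : R -> Prop := fun x =>
  scale_set (1/3) A x \/ shift_set (2/3) (scale_set (1/3) A) x.

Lemma cantor_C_SS (j : nat) : cantor_C (S (S j)) = cantor_step (cantor_C (S j)).
Proof. reflexivity. Qed.

Lemma cantor_C1_step_unit (x : R) :
  cantor_C 1 x <-> cantor_step (fun y => 0 <= y <= 1) x.
Proof.
  unfold cantor_step, scale_set, shift_set; simpl; split.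
  - intros [Hx Hmid]. destruct (Rle_dec x (1/3)).
    + left. exists (3 * x). split; lra.
    + right. exists (x - 2/3). split; [exists (3 * (x - 2/3)); split|]; lra.
  - intros [[a [Ha ->]] | [b [[a [Ha ->]] ->]]]; lra.
Qed.

Lemma midpoint_set_mono (A B : R -> Prop) (m : R) :
  (forall x, A x -> B x) -> midpoint_set A m -> midpoint_set B m.
Proof.
  intros AB [x [y [Hx [Hy [Hxy Hm]]]]].
  exists x, y. auto.
Qed.

Lemma midpoint_set_scale (c : R) (A : R -> Prop) (m : R) :
  c <> 0 -> midpoint_set A m -> midpoint_set (scale_set c A) (c * m).
Proof.
  intros Hc [x [y [Hx [Hy [Hxy ->]]]]].
  exists (c * x), (c * y). split; [exists x; auto|].
  split; [exists y; auto|]. split.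
  - intros E. apply Hxy, (Rmult_eq_reg_l c); assumption.
  - field.
Qed.

Lemma midpoint_set_shift (c : R) (A : R -> Prop) (m : R) :
  midpoint_set A m -> midpoint_set (shift_set c A) (c + m).
Proof.
  intros [x [y [Hx [Hy [Hxy ->]]]]].
  exists (c + x), (c + y). split; [exists x; auto|].
  split; [exists y; auto|]. split; [intros E; apply Hxy; lra | field].
Qed.

Lemma midpoint_set_unit_sub (A : R -> Prop) (m : R) :
  (forall x, A x -> 0 <= x <= 1) -> midpoint_set A m -> 0 < m < 1.
Proof.
  intros HA [x [y [Hx [Hy [Hxy ->]]]]].
  pose proof (HA x Hx). pose proof (HA y Hy).
  destruct (Rtotal_order x y) as [Hlt | [Heq | Hgt]]; [lra | contradiction | lra].
Qed.

Record midpoint_full (A : R -> Prop) : Prop := {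
  midpoint_full_sub : forall x, A x -> 0 <= x <= 1;
  midpoint_full_0 : A 0;
  midpoint_full_1 : A 1;
  midpoint_full_mid : forall m, 0 < m < 1 -> midpoint_set A m }.

Lemma midpoint_full_ext (A B : R -> Prop) :
  (forall x, A x <-> B x) -> midpoint_full A -> midpoint_full B.
Proof.
  intros E [Hsub H0 H1 Hmid]. split.
  - intros x Hx. apply Hsub, E, Hx.
  - apply E, H0.
  - apply E, H1.
  - intros m Hm. apply (midpoint_set_mono A); [apply E | auto].
Qed.

Lemma midpoint_full_unit : midpoint_full (fun x => 0 <= x <= 1).
Proof.
  split; try (intros; lra).
  intros m Hm. destruct (Rle_dec m (1/2)).
  - exists 0, (2 * m). repeat split; lra.
  - exists (2 * m - 1), 1. repeat split; lra.
Qed.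

Lemma midpoint_full_sum (A : R -> Prop) (s : R) :
  midpoint_full A -> 0 <= s <= 2 -> exists a b, A a /\ A b /\ a + b = s.
Proof.
  intros [_ H0 H1 Hmid] Hs.
  destruct (Req_dec s 0) as [-> | Hs0]; [exists 0, 0; auto with real |].
  destruct (Req_dec s 2) as [-> | Hs2]; [exists 1, 1; repeat split; auto; lra |].
  destruct (Hmid (s / 2)) as [a [b [Ha [Hb [_ Hab]]]]]; [lra |].
  exists a, b. repeat split; auto; lra.
Qed.

Lemma midpoint_full_step (A : R -> Prop) :
  midpoint_full A -> midpoint_full (cantor_step A).
Proof.
  intros HA. pose proof HA as [Hsub H0 H1 Hmid].
  unfold cantor_step. split.
  - intros x [[a [Ha ->]] | [b [[a [Ha ->]] ->]]]; specialize (Hsub a Ha); lra.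
  - left. exists 0. split; [auto | lra].
  - right. exists (1/3). split; [exists 1; split; [auto | lra] | lra].
  - intros m Hm. destruct (Rlt_le_dec m (1/3)) as [Hl | Hl].
    + replace m with (1/3 * (3 * m)) by field.
      apply (midpoint_set_mono (scale_set (1/3) A)); [auto |].
      apply midpoint_set_scale, Hmid; lra.
    + destruct (Rlt_le_dec (2/3) m) as [Hr | Hr].
      * replace m with (2/3 + 1/3 * (3 * m - 2)) by field.
        apply (midpoint_set_mono (shift_set (2/3) (scale_set (1/3) A))); [auto |].
        apply midpoint_set_shift, midpoint_set_scale, Hmid; lra.
      * destruct (midpoint_full_sum A (6 * m - 2)) as [a [b [Ha [Hb Hab]]]];
          [assumption | lra |].
        pose proof (Hsub a Ha). pose proof (Hsub b Hb).
        exists (1/3 * a), (2/3 + 1/3 * b).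
        split; [left; exists a; auto |].
        split; [right; exists (1/3 * b); split; [exists b; auto | auto] |].
        split; lra.
Qed.

Lemma midpoint_full_cantor_C (i : nat) : (1 <= i)%nat -> midpoint_full (cantor_C i).
Proof.
  intros Hi. induction i as [| [| j] IH]; [lia | |].
  - apply (midpoint_full_ext (cantor_step (fun y => 0 <= y <= 1))).
    + intros x. symmetry. apply cantor_C1_step_unit.
    + apply midpoint_full_step, midpoint_full_unit.
  - rewrite cantor_C_SS. apply midpoint_full_step, IH. lia.
Qed.

Theorem theorem2p6 : forall i : nat, (1 <= i)%nat ->
  forall m : R, midpoint_set (cantor_C i) m <-> 0 < m < 1.
Proof.
  intros i Hi m. destruct (midpoint_full_cantor_C i Hi) as [Hsub _ _ Hmid].
  split.
  - apply midpoint_set_unit_sub, Hsub.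
  - apply Hmid.
Qed.
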